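(* Let $l<u$ be real, $D=[l,u]$, $b>0$, and for $p\in D$ let $C_p = 1-\frac{1}{2}\left(e^{-\frac{p-l}{b}}+e^{-\frac{u-p}{b}}\right)$. Let $z\ge 0$. Then for all $q$ with $q\in D$ and $q+z\in D$ (and $q$ in the interior of the set of such points, so that the derivative is taken there), $$\frac{\partial}{\partial q}\left(\frac{C_{q+z}}{C_q}e^{\frac{z}{b}}\right)\le 0.$$
   Context: $C_p$ equals $\int_l^u \frac{1}{2b}e^{-|x-p|/b}\,dx$ for $p\in D$. *)

From Stdlib Require Import Reals Lra.
Open Scope R_scope.

Definition Cfun (l u b p : R) : R :=
  1 - / 2 * (exp (- ((p - l) / b)) + exp (- ((u - p) / b))).

Definition ratio_fun (l u b z : R) (q : R) : R :=
  Cfun l u b (q + z) / Cfun l u b q * exp (z / b).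

(** Put [a = e^{-(q-l)/b}], [c = e^{-(u-q)/b}] and [t = e^{z/b} >= 1]; shifting
    [q] by [z] turns [a] into [a/t] and [c] into [c t].  Since [C' = (a - c)/(2b)],
    the numerator [C'_{q+z} C_q - C_{q+z} C'_q] of the quotient rule equals
    [-(t-1)/(2bt) (a(1-c) + c t (1-a))], which is [<= 0] because [0 < a, c < 1]. *)
From Stdlib Require Import Reals Lra.
From Coquelicot Require Import Coquelicot.
Open Scope R_scope.

Definition Cderiv (l u b p : R) : R :=
  (exp (- ((p - l) / b)) - exp (- ((u - p) / b))) / (2 * b).

Lemma exp_opp_lt_1 (x : R) : 0 < x -> exp (- x) < 1.
Proof. intros hx; rewrite <- exp_0; apply exp_increasing; lra. Qed.

Lemma exp_ge_1 (x : R) : 0 <= x -> 1 <= exp x.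
Proof.
  intros [hx | <-]; rewrite <- exp_0; [left; apply exp_increasing; lra | lra].
Qed.

Lemma is_derive_Cfun (l u b p : R) : b <> 0 ->
  is_derive (Cfun l u b) p (Cderiv l u b p).
Proof. intros hb; unfold Cfun, Cderiv; auto_derive; [auto | unfold Rminus, Rdiv; field; auto]. Qed.

Lemma Cfun_pos (l u b p : R) : 0 < b -> l < p -> p < u -> 0 < Cfun l u b p.
Proof.
  intros hb hlp hpu; unfold Cfun.
  assert (exp (- ((p - l) / b)) < 1) by (apply exp_opp_lt_1, Rdiv_lt_0_compat; lra).
  assert (exp (- ((u - p) / b)) < 1) by (apply exp_opp_lt_1, Rdiv_lt_0_compat; lra).
  lra.
Qed.

Lemma exp_shift_left (l b p z : R) :
  exp (- ((p + z - l) / b)) = exp (- ((p - l) / b)) / exp (z / b).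
Proof.
  unfold Rdiv; rewrite <- exp_Ropp, <- exp_plus; f_equal; ring.
Qed.

Lemma exp_shift_right (u b p z : R) :
  exp (- ((u - (p + z)) / b)) = exp (- ((u - p) / b)) * exp (z / b).
Proof. rewrite <- exp_plus; f_equal; unfold Rdiv; ring. Qed.

Lemma shifted_cross_term_nonpos (a c t : R) :
  0 < a < 1 -> 0 < c < 1 -> 1 <= t ->
  (a / t - c * t) * (1 - / 2 * (a + c))
    - (1 - / 2 * (a / t + c * t)) * (a - c) <= 0.
Proof.
  intros ha hc ht.
  replace ((a / t - c * t) * (1 - / 2 * (a + c))
             - (1 - / 2 * (a / t + c * t)) * (a - c))
    with (- ((t - 1) / t * (a * (1 - c) + c * t * (1 - a)))) by (field; lra).
  assert (0 <= (t - 1) / t) by (apply Rdiv_le_0_compat; lra).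
  assert (0 <= a * (1 - c)) by (apply Rmult_le_pos; lra).
  assert (0 <= c * t * (1 - a)) by (apply Rmult_le_pos; [apply Rmult_le_pos |]; lra).
  nra.
Qed.

Lemma Cfun_cross_term_nonpos (l u b z q : R) :
  0 < b -> 0 <= z -> l < q -> q + z < u ->
  Cderiv l u b (q + z) * Cfun l u b q - Cfun l u b (q + z) * Cderiv l u b q <= 0.
Proof.
  intros hb hz hlq hqu; unfold Cderiv, Cfun.
  rewrite exp_shift_left, exp_shift_right.
  set (a := exp (- ((q - l) / b))); set (c := exp (- ((u - q) / b))).
  set (t := exp (z / b)).
  assert (0 < a < 1) by (split; [apply exp_pos | apply exp_opp_lt_1, Rdiv_lt_0_compat; lra]).
  assert (0 < c < 1) by (split; [apply exp_pos | apply exp_opp_lt_1, Rdiv_lt_0_compat; lra]).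
  assert (1 <= t) by (apply exp_ge_1, Rdiv_le_0_compat; lra).
  assert (hnum := shifted_cross_term_nonpos a c t).
  replace ((a / t - c * t) / (2 * b) * (1 - / 2 * (a + c))
             - (1 - / 2 * (a / t + c * t)) * ((a - c) / (2 * b)))
    with (/ (2 * b) * ((a / t - c * t) * (1 - / 2 * (a + c))
                         - (1 - / 2 * (a / t + c * t)) * (a - c))) by (field; lra).
  assert (0 < / (2 * b)) by (apply Rinv_0_lt_compat; lra).
  nra.
Qed.

Lemma is_derive_ratio_fun (l u b z q : R) : b <> 0 -> Cfun l u b q <> 0 ->
  is_derive (ratio_fun l u b z) q
    ((Cderiv l u b (q + z) * Cfun l u b q - Cfun l u b (q + z) * Cderiv l u b q)
       / Cfun l u b q ^ 2 * exp (z / b)).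
Proof.
  intros hb hC.
  assert (hshift : is_derive (fun p => Cfun l u b (p + z)) q (Cderiv l u b (q + z))).
  { replace (Cderiv l u b (q + z)) with (1 * Cderiv l u b (q + z)) by ring.
    apply (is_derive_comp (Cfun l u b) (fun p => p + z)).
    - apply is_derive_Cfun; exact hb.
    - auto_derive; [auto | ring]. }
  exact (is_derive_scal_l _ q _ (exp (z / b))
           (is_derive_div _ _ q _ _ hshift (is_derive_Cfun l u b q hb) hC)).
Qed.

Theorem lemmaA2 (l u b z : R) (hlu : l < u) (hb : 0 < b) (hz : 0 <= z) :
  forall q : R, l < q -> q + z < u ->
    exists d : R, derivable_pt_lim (ratio_fun l u b z) q d /\ d <= 0.
Proof.
  intros q hlq hqu.
  assert (hCq : 0 < Cfun l u b q) by (apply Cfun_pos; lra).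
  eexists; split.
  - apply is_derive_Reals, is_derive_ratio_fun; lra.
  - apply Rmult_le_0_r; [| left; apply exp_pos].
    apply Rmult_le_0_r; [apply Cfun_cross_term_nonpos; lra |].
    left; apply Rinv_0_lt_compat, pow_lt; exact hCq.
Qed.
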